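(* Let $n\ge 2$, $d_1,\dots,d_n\ge 1$, $L_i\in\mathbb{C}^{d_i\times d_i}$ ($i=1,\dots,n$) and $C_{i,i-1}\in\mathbb{C}^{d_i\times d_{i-1}}$ ($i=2,\dots,n$). Assume: (i) each $L_i$ is invertible and diagonalizable, $L_iV_i=V_i\Lambda_i$ with $V_i$ invertible and $\Lambda_i=\mathrm{diag}(\lambda_{i,1},\dots,\lambda_{i,d_i})$; (ii) $\sigma(L_i)\cap\sigma(L_j)=\emptyset$ for all $i\neq j$; (iii) $\|L_1\|<\|L_2\|<\cdots<\|L_n\|\le 1$. Then for all $i\in\{2,\dots,n\}$, all $x=(x_1,\dots,x_n)$ and all $t\in\mathbb{N}$, $$\big\|\Pi_i\circ\mathsf{Lin}^{\circ t}(x)-L_i^t\,\mathsf{pert}_i(x_1,\dots,x_i)\big\|\le\sum_{j=1}^{i-1}\|D_{i,j}\|\,\big\|L_j^t\,\mathsf{pert}_j(x_1,\dots,x_j)\big\|,$$ and $$\lim_{t\to\infty}\frac{\big\|\Pi_i\circ\mathsf{Lin}^{\circ t}(x)-L_i^t\,\mathsf{pert}_i(x_1,\dots,x_i)\big\|}{\|L_i\|^t}=0.$$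
   Context: Each $\mathbb{C}^{d_i}$ carries a fixed norm $\|\cdot\|$ and matrices the induced operator norm. $\Pi_i(x_1,\dots,x_n)=x_i$; $\mathsf{Lin}(x_1,\dots,x_n)=(L_1x_1,\;L_2x_2+C_{2,1}x_1,\;\dots,\;L_nx_n+C_{n,n-1}x_{n-1})$ and $\mathsf{Lin}^{\circ t}$ is its $t$-fold iterate. Matrices $D_{i,j}$ ($1\le j\le i\le n$) are defined recursively in $i$: $D_{i,i}=I_{d_i}$; for $i\ge 2$ and $1\le j\le i-1$, $[\tilde C_{i,j}]_{\ell,m}=[V_i^{-1}C_{i,i-1}D_{i-1,j}V_j]_{\ell,m}(1-\lambda_{j,m}/\lambda_{i,\ell})^{-1}$ and $D_{i,j}=L_i^{-1}V_i\tilde C_{i,j}V_j^{-1}$. The maps $\mathsf{pert}_i$ are $\mathsf{pert}_1(x_1)=x_1$ and $\mathsf{pert}_i(x_1,\dots,x_i)=x_i+\sum_{j=1}^{i-1}(-1)^{i-1-j}D_{i,j}\mathsf{pert}_j(x_1,\dots,x_j)$ for $i\ge 2$. *)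

From HB Require Import structures.
From mathcomp Require Import all_boot all_order all_algebra.
From mathcomp Require Import all_classical all_reals all_analysis.
From mathcomp Require Import complex.
Set Implicit Arguments. Unset Strict Implicit. Unset Printing Implicit Defensive.
Import Order.TTheory GRing.Theory Num.Theory.
Local Open Scope ring_scope.
Local Open Scope classical_set_scope.

Definition cmod {R : realType} (z : R[i]) : R := ComplexField.Normc.normc z.

Definition is_norm {R : realType} (m : nat) (N : 'cV[R[i]]_m -> R) : Prop :=
  [/\ forall x, 0 <= N x,
      forall x, N x = 0 -> x = 0,
      forall (a : R[i]) x, N (a *: x) = cmod a * N x
    & forall x y, N (x + y) <= N x + N y].

Definition opnorm {R : realType} (m k : nat) (Nin : 'cV[R[i]]_m -> R)
  (Nout : 'cV[R[i]]_k -> R) (A : 'M[R[i]]_(k, m)) : R :=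
  sup [set Nout (A *m x) | x in [set x | Nin x <= 1]].

Section Defs.
Context {R : realType}.
Local Notation C := R[i].

(* The linear map Lin on tuples x = (x_i)_i with x_i in C^{d_i}
   (indices 1..n are meaningful; index 0 and indices > n are never read
   by components 1..n). *)
Definition Lin (d : nat -> nat) (L : forall i, 'M[C]_(d i))
  (Cm : forall i, 'M[C]_(d i, d i.-1)) (x : forall i, 'cV[C]_(d i)) :
  forall i, 'cV[C]_(d i) :=
  fun i => L i *m x i + (if (1 < i)%N then Cm i *m x i.-1 else 0).

(* The matrices D_{i,j}: Dm i j is D_{i,j} for 1 <= j <= i;
   D_{i,i} = I, and for j < i the recursive formula of the paper.
   Values outside that range are irrelevant (set to 0). *)
Fixpoint Dm (d : nat -> nat) (L : forall i, 'M[C]_(d i))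
  (Cm : forall i, 'M[C]_(d i, d i.-1)) (V : forall i, 'M[C]_(d i))
  (lam : forall i, 'I_(d i) -> C) (i : nat) : forall j, 'M[C]_(d i, d j) :=
  match i as i0 return forall j, 'M[C]_(d i0, d j) with
  | 0 => fun j => 0
  | i'.+1 => fun j =>
      if j == i'.+1 then conform_mx 0 (1%:M : 'M[C]_(d i'.+1))
      else if ((0 < j) && (j < i'.+1))%N then
        let Ct : 'M[C]_(d i'.+1, d j) :=
          \matrix_(l, m)
            ((invmx (V i'.+1) *m Cm i'.+1 *m Dm L Cm V lam i' j *m V j) l m
             * (1 - lam j m / lam i'.+1 l)^-1) in
        invmx (L i'.+1) *m V i'.+1 *m Ct *m invmx (V j)
      else 0
  end.

(* pertAll k j = pert_j(x_1,...,x_j) for 1 <= j <= k (0 otherwise). *)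
Fixpoint pertAll (d : nat -> nat) (D : forall i j, 'M[C]_(d i, d j))
  (x : forall i, 'cV[C]_(d i)) (k : nat) : forall j, 'cV[C]_(d j) :=
  match k with
  | 0 => fun j => 0
  | k'.+1 => fun j =>
      if ((0 < j) && (j <= k'.+1))%N then
        x j + \sum_(1 <= m < j)
                 ((-1) ^+ (j.-1 - m) *: (D j m *m pertAll D x k' m))
      else 0
  end.

Definition pert (d : nat -> nat) (D : forall i j, 'M[C]_(d i, d j))
  (x : forall i, 'cV[C]_(d i)) (i : nat) : 'cV[C]_(d i) :=
  pertAll D x i i.

End Defs.

From HB Require Import structures.
From mathcomp Require Import all_boot all_order all_algebra.
From mathcomp Require Import all_classical all_reals all_analysis.
From mathcomp Require Import complex.
From mathcomp Require Import ring.
Import Order.TTheory GRing.Theory Num.Theory.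
Import numFieldNormedType.Exports.
Local Open Scope ring_scope.
Local Open Scope classical_set_scope.

(* The coupling matrix D_{i,j} solves the Sylvester equation
   L_i D_{i,j} - D_{i,j} L_j = C_{i,i-1} D_{i-1,j}: since L_i and L_j are
   diagonalizable with disjoint spectra, the equation becomes a scalar one for
   each entry in their eigenbases, and the paper's formula is its solution.
   With these matrices the i-th component of Lin^t x has the closed form
   sum_{j <= i} (-1)^(i-j) D_{i,j} L_j^t pert_j(x): for t = 0 this is the
   recursive definition of pert read backwards, and the Sylvester equations
   make the cross terms telescope from t to t + 1.  Removing the j = i term and
   bounding the others by operator norms gives the first estimate; as
   ||L_j|| < ||L_i|| for j < i, each remaining term is o(||L_i||^t), which gives
   the limit.  Operator norms are finite since any norm on C^m dominates the
   coordinates, the norm being bounded below on the compact unit sphere of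
   R^(2m). *)

(* With B = C_{i+1,i} D_{i,j} this is the paper's D_{i+1,j}. *)
Definition sylvester_sol {F : fieldType} {p q : nat} (P Vp : 'M[F]_p)
  (mu : 'I_p -> F) (Vq : 'M[F]_q) (nu : 'I_q -> F) (B : 'M[F]_(p, q)) :
  'M[F]_(p, q) :=
  invmx P *m Vp
  *m (\matrix_(l, m) ((invmx Vp *m B *m Vq) l m * (1 - nu m / mu l)^-1))
  *m invmx Vq.

Section Diagonalizable.
Variables (F : fieldType) (m : nat) (A V : 'M[F]_m) (lam : 'I_m -> F).
Local Set Implicit Arguments. Local Unset Strict Implicit.
Hypotheses (V_unit : V \in unitmx) (AV : A *m V = V *m diag_mx (\row_k lam k)).

Lemma row_unitmx_neq0 (M : 'M[F]_m) k : M \in unitmx -> row k M != 0.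
Proof.
move=> M_unit; apply/eqP => Mk0.
have /rowP/(_ k) : row k (M *m invmx M) = 0 by rewrite row_mul Mk0 mul0mx.
by rewrite mulmxV // !mxE eqxx => /eqP; rewrite oner_eq0.
Qed.

Lemma invmx_diagonalized : invmx V *m A = diag_mx (\row_k lam k) *m invmx V.
Proof.
apply: (can_inj (mulmxK V_unit)).
by rewrite -mulmxA AV mulmxA mulVmx // mul1mx -mulmxA mulVmx // mulmx1.
Qed.

Lemma row_invmx_diagonalized k :
  row k (invmx V) *m A = lam k *: row k (invmx V).
Proof.
by rewrite -row_mul invmx_diagonalized; apply/rowP => j; rewrite mul_diag_mx !mxE.
Qed.

Lemma eigenvalue_diagonalized k : eigenvalue A (lam k).
Proof.
apply/eigenvalueP; exists (row k (invmx V)); first exact: row_invmx_diagonalized.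
by rewrite row_unitmx_neq0 ?unitmx_inv.
Qed.

Lemma diagonalized_unit_neq0 k : A \in unitmx -> lam k != 0.
Proof.
move=> A_unit; apply/eqP => lam0.
have Vinv_unit : invmx V \in unitmx by rewrite unitmx_inv.
have /eqP := row_unitmx_neq0 k Vinv_unit; apply.
have A_free : row_free A by rewrite row_free_unit.
apply: (row_free_inj A_free).
by rewrite /= row_invmx_diagonalized lam0 scale0r mul0mx.
Qed.

End Diagonalizable.

Section Sylvester.
Variables (F : fieldType) (p q : nat).
Variables (P Vp : 'M[F]_p) (mu : 'I_p -> F) (Q Vq : 'M[F]_q) (nu : 'I_q -> F).
Local Set Implicit Arguments. Local Unset Strict Implicit.
Hypotheses (P_unit : P \in unitmx) (Vp_unit : Vp \in unitmx)
  (Vq_unit : Vq \in unitmx).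
Hypotheses (PV : P *m Vp = Vp *m diag_mx (\row_k mu k))
  (QV : Q *m Vq = Vq *m diag_mx (\row_k nu k)).
Hypothesis mu_neq_nu : forall l m, mu l != nu m.

Lemma sylvester_solP B :
  P *m sylvester_sol P Vp mu Vq nu B - sylvester_sol P Vp mu Vq nu B *m Q = B.
Proof.
set X := sylvester_sol _ _ _ _ _ B.
apply: (can_inj (mulKVmx Vp_unit)); apply: (can_inj (mulmxK Vq_unit)).
set Bt := invmx Vp *m B *m Vq.
pose Ct := \matrix_(l, m) (Bt l m * (1 - nu m / mu l)^-1).
have XE : X = invmx P *m Vp *m Ct *m invmx Vq by [].
have mu_neq0 l : mu l != 0 := diagonalized_unit_neq0 Vp_unit PV l P_unit.
pose Y := invmx Vp *m X *m Vq.
have YE l m : Y l m = Ct l m / mu l.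
  have LY : diag_mx (\row_k mu k) *m Y = Ct.
    rewrite /Y XE !mulmxA -(invmx_diagonalized Vp_unit PV).
    rewrite -(mulmxA _ P) mulmxV // mulmx1 mulVmx // mul1mx.
    by rewrite -mulmxA mulVmx // mulmx1.
  by rewrite -LY mul_diag_mx !mxE mulrAC divff // mul1r.
have lhsE : invmx Vp *m (P *m X - X *m Q) *m Vq
          = diag_mx (\row_k mu k) *m Y - Y *m diag_mx (\row_k nu k).
  rewrite mulmxBr mulmxBl /Y !mulmxA (invmx_diagonalized Vp_unit PV) -!mulmxA QV.
  by rewrite !mulmxA.
rewrite lhsE mul_diag_mx mul_mx_diag; apply/matrixP => l m.
clearbody Y Bt; rewrite !mxE !YE /Ct mxE.
have mu_nu : mu l - nu m != 0 by rewrite subr_eq0 mu_neq_nu.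
field; by rewrite mu_neq0 mu_nu.
Qed.

End Sylvester.

Lemma expr0_mulmx (T : pzRingType) m p (A : 'M[T]_m) (B : 'M[T]_(m, p)) :
  A ^+ 0 *m B = B.
Proof. by rewrite expr0 -idmxE mul1mx. Qed.

Lemma exprS_mulmx (T : pzRingType) m p (A : 'M[T]_m) k (B : 'M[T]_(m, p)) :
  A ^+ k.+1 *m B = A *m (A ^+ k *m B).
Proof. by rewrite exprS mulmxA mulmxE. Qed.

Lemma signS (T : pzRingType) a b : (b <= a)%N ->
  (-1 : T) ^+ (a.+1 - b) = - (-1) ^+ (a - b).
Proof. by move=> ba; rewrite subSn // exprS mulN1r. Qed.

Section Perturbation.
Variables (R : realType) (d : nat -> nat).
Local Notation C := R[i].
Variables (D : forall i j, 'M[C]_(d i, d j)) (x : forall i, 'cV[C]_(d i)).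
Local Set Implicit Arguments. Local Unset Strict Implicit.

Lemma pertAll_recE k j : pertAll D x k.+1 j =
  if (0 < j <= k.+1)%N then
    x j + \sum_(1 <= m < j) (-1) ^+ (j.-1 - m) *: (D j m *m pertAll D x k m)
  else 0.
Proof. by []. Qed.

Lemma pertAllS k j : (0 < j <= k)%N -> pertAll D x k.+1 j = pertAll D x k j.
Proof.
elim: k j => [|k IHk] j /andP[j0 jk]; first by case: j j0 jk.
rewrite pertAll_recE [RHS]pertAll_recE j0 jk (leq_trans jk) //; congr (_ + _).
apply: eq_big_nat => m /andP[m0 mj]; rewrite IHk // m0.
by rewrite -ltnS (leq_trans mj).
Qed.

Lemma pertAll_pert k j : (0 < j <= k)%N -> pertAll D x k j = pert D x j.
Proof.
elim: k => [|k IHk] /andP[j0]; first by case: j j0.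
rewrite leq_eqVlt => /orP[/eqP-> // | jk].
by rewrite pertAllS ?IHk // j0.
Qed.

Lemma pertE j : (0 < j)%N ->
  pert D x j = x j + \sum_(1 <= m < j) (-1) ^+ (j.-1 - m) *: (D j m *m pert D x m).
Proof.
case: j => // j _; rewrite /pert pertAll_recE leqnn; congr (_ + _).
by apply: eq_big_nat => m /andP[m0 mj]; rewrite pertAll_pert ?m0.
Qed.

Hypothesis D_diag : forall i, (0 < i)%N -> D i i = 1%:M.

Lemma pert_inversion i : (0 < i)%N ->
  x i = \sum_(1 <= j < i.+1) (-1) ^+ (i - j) *: (D i j *m pert D x j).
Proof.
move=> i0; rewrite big_nat_recr //= subnn expr0 scale1r D_diag // mul1mx.
rewrite (pertE i0) addrCA -big_split /= big1_seq ?addr0 // => m.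
rewrite mem_index_iota => /andP[_ /andP[_ mi]]; case: i i0 mi => // i _ mi /=.
by rewrite -scalerDl signS // addNr scale0r.
Qed.

End Perturbation.

Section ClosedForm.
Variables (R : realType) (n : nat) (d : nat -> nat).
Local Notation C := R[i].
Variables (L : forall i, 'M[C]_(d i)) (Cm : forall i, 'M[C]_(d i, d i.-1))
  (D : forall i j, 'M[C]_(d i, d j)).
Local Set Implicit Arguments. Local Unset Strict Implicit.
Hypothesis D_diag : forall i, (0 < i)%N -> D i i = 1%:M.
Hypothesis D_sylvester : forall i j, (0 < j < i)%N -> (i <= n)%N ->
  L i *m D i j - D i j *m L j = Cm i *m D i.-1 j.

Lemma iter_Lin_closed_form x t i : (0 < i <= n)%N ->
  iter t (Lin L Cm) x i =
  \sum_(1 <= j < i.+1) (-1) ^+ (i - j) *: (D i j *m (L j ^+ t *m pert D x j)).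
Proof.
elim: t i => [|t IHt] i /andP[i0 iln].
  rewrite /= (pert_inversion x D_diag i0).
  by apply: eq_bigr => j _; rewrite expr0_mulmx.
rewrite iterS {1}/Lin IHt ?i0 // mulmx_sumr big_nat_recr //= [in RHS]big_nat_recr //=.
rewrite subnn !expr0 !scale1r D_diag // !mul1mx exprS_mulmx.
case: i i0 iln => // -[_ _ | i _ iSn].
  by rewrite !big_geq // add0r addr0.
rewrite /= IHt ?(ltnW iSn) // mulmx_sumr addrAC -big_split /=; congr (_ + _).
apply: eq_big_nat => j /andP[j0 ji].
have sylv : L i.+2 *m D i.+2 j - D i.+2 j *m L j = Cm i.+2 *m D i.+1 j.
  by apply: D_sylvester; rewrite ?j0.
rewrite signS // -!scalemxAr exprS_mulmx !mulmxA -sylv.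
by rewrite !mulmxBl scalerBr !scaleNr addKr.
Qed.

End ClosedForm.

Section ComplexModulus.
Variable R : realType.
Local Notation C := R[i].

Lemma cmod0 : cmod (0 : C) = 0.
Proof. exact: ComplexField.Normc.normc0. Qed.

Lemma cmodM (a b : C) : cmod (a * b) = cmod a * cmod b.
Proof. exact: ComplexField.Normc.normcM. Qed.

Lemma cmod_real (r : R) : cmod (r%:C)%C = `|r|.
Proof. by rewrite /cmod /= expr0n /= addr0 sqrtr_sqr. Qed.

Lemma cmod_sign k : cmod ((-1 : C) ^+ k) = 1.
Proof.
elim: k => [|k IHk]; first exact: ComplexField.Normc.normc1.
by rewrite exprS cmodM IHk mulr1 /cmod normcN ComplexField.Normc.normc1.
Qed.

Lemma cmod_le_Re_Im (a b : R) : cmod (a +i* b)%C <= `|a| + `|b|.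
Proof.
rewrite /cmod /= -[leRHS]ger0_norm ?addr_ge0 // -sqrtr_sqr ler_sqrt ?sqr_ge0 //.
rewrite sqrrD addrAC (real_normK (num_real a)) (real_normK (num_real b)).
by rewrite lerDl mulrn_wge0 // mulr_ge0.
Qed.

End ComplexModulus.

Section Norms.
Variables (R : realType) (m : nat) (N : 'cV[R[i]]_m -> R).
Local Notation C := R[i].
Local Set Implicit Arguments. Local Unset Strict Implicit.
Hypothesis N_norm : is_norm N.

Lemma is_norm_ge0 x : 0 <= N x.
Proof. by case: N_norm. Qed.

Lemma is_norm_eq0 x : N x = 0 -> x = 0.
Proof. by case: N_norm => _ + _ _; apply. Qed.

Lemma is_normZ a x : N (a *: x) = cmod a * N x.
Proof. by case: N_norm => _ _ + _; apply. Qed.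

Lemma is_normD x y : N (x + y) <= N x + N y.
Proof. by case: N_norm => _ _ _; apply. Qed.

Lemma is_norm0 : N 0 = 0.
Proof. by rewrite -(scale0r (0 : 'cV[C]_m)) is_normZ cmod0 mul0r. Qed.

Lemma is_normN x : N (- x) = N x.
Proof. by rewrite -scaleN1r is_normZ (cmod_sign _ 1) mul1r. Qed.

Lemma is_norm_sum I (r : seq I) (P : pred I) (F : I -> 'cV[C]_m) :
  N (\sum_(i <- r | P i) F i) <= \sum_(i <- r | P i) N (F i).
Proof.
apply: (big_rec2 (fun v s => N v <= s)); first by rewrite is_norm0.
by move=> i v s _ Nv; apply: le_trans (is_normD _ _) _; rewrite lerD2l.
Qed.

Lemma is_norm_dist x y : `|N x - N y| <= N (x - y).
Proof.
rewrite ler_distl; apply/andP; split.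
  have := is_normD (y - x) x; rewrite subrK -opprB is_normN.
  by rewrite lerBlDr addrC.
by have := is_normD (x - y) y; rewrite subrK addrC.
Qed.

Definition cV_of_reim (v : 'rV[R]_(m + m)) : 'cV[C]_m :=
  \col_k ((v 0 (lshift m k)) +i* (v 0 (rshift m k)))%C.

Definition reim_of_cV (x : 'cV[C]_m) : 'rV[R]_(m + m) :=
  row_mx (\row_k complex.Re (x k 0)) (\row_k complex.Im (x k 0)).

Lemma reim_of_cVK : cancel reim_of_cV cV_of_reim.
Proof.
move=> x; apply/matrixP => k j; rewrite (ord1 j) mxE row_mxEl row_mxEr !mxE.
by case: (x k 0).
Qed.

Lemma cV_of_reimB v w : cV_of_reim (v - w) = cV_of_reim v - cV_of_reim w.
Proof. by apply/matrixP => k j; rewrite !mxE. Qed.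

Lemma cV_of_reimZ (r : R) v : cV_of_reim (r *: v) = (r%:C)%C *: cV_of_reim v.
Proof.
apply/matrixP => k j; rewrite !mxE /=; apply/eqP.
by rewrite eq_complex /= !mul0r subr0 addr0 !eqxx.
Qed.

Lemma cV_of_reim_eq0 v : cV_of_reim v = 0 -> v = 0.
Proof.
move=> /matrixP v0; rewrite -[v]hsubmxK.
have vk0 k : v 0 (lshift m k) = 0 /\ v 0 (rshift m k) = 0.
  by move: (v0 k 0); rewrite !mxE => -[-> ->].
have -> : lsubmx v = 0 by apply/rowP => k; rewrite !mxE (vk0 k).1.
have -> : rsubmx v = 0 by apply/rowP => k; rewrite !mxE (vk0 k).2.
by rewrite row_mx0.
Qed.

Lemma rV_entry_le_norm (v : 'rV[R]_(m + m)) j : `|v 0 j| <= `|v|.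
Proof.
change (`|v 0 j| <= mx_norm v); rewrite mx_normrE; apply/bigmax_geP; right => /=.
by exists (0, j).
Qed.

Lemma cV_sum_delta (x : 'cV[C]_m) : x = \sum_k x k 0 *: delta_mx k 0.
Proof. by rewrite [LHS]matrix_sum_delta; apply: eq_bigr => k _; rewrite big_ord1. Qed.

Lemma norm_cV_of_reim_le :
  exists2 K, 0 <= K & forall v, N (cV_of_reim v) <= K * `|v|.
Proof.
exists (\sum_k 2 * N (delta_mx k 0)).
  by apply: sumr_ge0 => k _; rewrite mulr_ge0 // is_norm_ge0.
move=> v; rewrite {1}[cV_of_reim v]cV_sum_delta.
apply: le_trans (is_norm_sum _ _ _) _.
rewrite mulr_suml; apply: ler_sum => k _; rewrite is_normZ.
rewrite mulrAC ler_wpM2r ?is_norm_ge0 // mxE.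
apply: le_trans (cmod_le_Re_Im _ _ _) _.
by rewrite mulr2n mulrDl mul1r lerD ?rV_entry_le_norm.
Qed.

Lemma continuous_norm_cV_of_reim :
  continuous (fun v => N (cV_of_reim v)).
Proof.
have [K K0 NK] := norm_cV_of_reim_le.
move=> v; apply/(@cvgrPdist_lt _ _ _ (nbhs v) (nbhs_filter v)) => e e0.
have K1 : 0 < K + 1 by rewrite ltr_wpDl.
near=> w.
apply: le_lt_trans (is_norm_dist _ _) _; rewrite -cV_of_reimB.
apply: le_lt_trans (NK _) _.
have : `|v - w| < e / (K + 1).
  by near: w; apply: cvgr_dist_lt => //; exact: divr_gt0.
rewrite ltr_pdivlMr // => vw; apply: le_lt_trans vw.
by rewrite mulrDr mulr1 mulrC lerDl.
Unshelve. all: by end_near.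
Qed.

Lemma norm_cV_of_reim_ge : (0 < m)%N ->
  exists2 mu, 0 < mu & forall v, mu * `|v| <= N (cV_of_reim v).
Proof.
move=> m0; pose S := [set v : 'rV[R]_(m + m) | `|v| = 1].
have S_compact : compact S.
  apply: bounded_closed_compact.
    rewrite /= /bounded_near; near=> M => v /= ->.
    by near: M; apply: nbhs_pinfty_ge; exact: num_real.
  exact: (continuous_closedP _).1 (@norm_continuous R _) _ (@closed_eq R 1).
have S_neq0 : S !=set0.
  pose w : 'rV[R]_(m + m) := const_mx 1.
  have w_neq0 : w != 0.
    apply/eqP => /rowP /(_ (lshift m (Ordinal m0))); rewrite !mxE => /eqP.
    by rewrite oner_eq0.
  by exists (`|w|^-1 *: w); rewrite /S /= normrZV // unitfE normr_eq0.
have [c Sc c_min] := compact_EVT_min S_neq0 S_compact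
  (continuous_subspaceT continuous_norm_cV_of_reim).
have c1 : `|c| = 1 by move: Sc; rewrite inE.
have Nc_gt0 : 0 < N (cV_of_reim c).
  rewrite lt_def is_norm_ge0 andbT; apply/eqP => /is_norm_eq0 /cV_of_reim_eq0 c0.
  by move: c1; rewrite c0 normr0 => /eqP; rewrite eq_sym oner_eq0.
exists (N (cV_of_reim c)) => // v.
have [->|v_neq0] := eqVneq v 0; first by rewrite normr0 mulr0 is_norm_ge0.
have v_gt0 : 0 < `|v| by rewrite normr_gt0.
have := c_min (`|v|^-1 *: v).
rewrite inE /S /= normrZV ?unitfE ?gt_eqF // => /(_ erefl).
rewrite cV_of_reimZ is_normZ cmod_real ger0_norm ?invr_ge0 ?normr_ge0 // => Nc_le.
by have := ler_wpM2r (ltW v_gt0) Nc_le; rewrite mulrAC mulVf ?gt_eqF // mul1r.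
Unshelve. all: by end_near.
Qed.

Lemma is_norm_entry_le :
  exists2 c, 0 < c & forall (x : 'cV[C]_m) k, cmod (x k 0) <= c * N x.
Proof.
have [m0|m0] := posnP m.
  by exists 1 => // x k; move: (ltn_ord k); rewrite {2}m0.
have [mu mu0 mu_le] := norm_cV_of_reim_ge m0.
exists (2 / mu); first by rewrite divr_gt0.
move=> x k; rewrite -{1}(reim_of_cVK x) mxE.
apply: le_trans (cmod_le_Re_Im _ _ _) _.
apply: (@le_trans _ _ (2 * `|reim_of_cV x|)).
  by rewrite mulr2n mulrDl mul1r lerD ?rV_entry_le_norm.
rewrite -mulrA ler_wpM2l // -[leLHS](mulKf (lt0r_neq0 mu0)).
rewrite ler_wpM2l ?invr_ge0 ?(ltW mu0) //.
by have := mu_le (reim_of_cV x); rewrite reim_of_cVK.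
Qed.

End Norms.

Section OperatorNorm.
Variables (R : realType) (m k : nat).
Variables (Nin : 'cV[R[i]]_m -> R) (Nout : 'cV[R[i]]_k -> R).
Local Set Implicit Arguments. Local Unset Strict Implicit.
Hypotheses (Nin_norm : is_norm Nin) (Nout_norm : is_norm Nout).

Lemma mulmx_norm_bounded (A : 'M[R[i]]_(k, m)) :
  exists2 K, 0 <= K & forall x, Nout (A *m x) <= K * Nin x.
Proof.
have [c c0 entry_le] := is_norm_entry_le Nin_norm.
exists (c * \sum_j Nout (A *m delta_mx j 0)).
  by rewrite mulr_ge0 ?(ltW c0) ?sumr_ge0 // => j _; exact: is_norm_ge0.
move=> x; rewrite {1}[x]cV_sum_delta mulmx_sumr.
apply: le_trans (is_norm_sum Nout_norm _ _ _) _.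
rewrite mulr_sumr mulr_suml; apply: ler_sum => j _.
by rewrite -scalemxAr is_normZ // mulrAC ler_wpM2r ?is_norm_ge0.
Qed.

Lemma has_sup_opnorm A : has_sup [set Nout (A *m x) | x in [set x | Nin x <= 1]].
Proof.
split; first by exists (Nout (A *m 0)), 0; rewrite //= (is_norm0 Nin_norm) ler01.
have [K K0 AK] := mulmx_norm_bounded A.
exists K => _ [x Nx1 <-]; apply: le_trans (AK x) _.
by rewrite -[leRHS]mulr1 ler_wpM2l.
Qed.

Lemma opnorm_ge0 A : 0 <= opnorm Nin Nout A.
Proof.
have A0_in : [set Nout (A *m x) | x in [set x | Nin x <= 1]] (Nout (A *m 0)).
  by exists 0; rewrite //= (is_norm0 Nin_norm) ler01.
apply: le_trans (sup_upper_bound (has_sup_opnorm A) A0_in).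
by rewrite mulmx0 (is_norm0 Nout_norm).
Qed.

Lemma opnorm_mulmx_le A x : Nout (A *m x) <= opnorm Nin Nout A * Nin x.
Proof.
have [Nx0|Nx_neq0] := eqVneq (Nin x) 0.
  by rewrite Nx0 mulr0 (is_norm_eq0 Nin_norm Nx0) mulmx0 (is_norm0 Nout_norm).
have Nx_gt0 : 0 < Nin x by rewrite lt_def Nx_neq0 is_norm_ge0.
pose a : R[i] := ((Nin x)^-1)%:C%C.
have cmod_a : cmod a = (Nin x)^-1 by rewrite cmod_real ger0_norm // invr_ge0 ltW.
have ax_in : [set Nout (A *m y) | y in [set y | Nin y <= 1]] (Nout (A *m (a *: x))).
  by exists (a *: x); rewrite //= (is_normZ Nin_norm) cmod_a mulVf ?lt0r_neq0.
have := sup_upper_bound (has_sup_opnorm A) ax_in.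
by rewrite -scalemxAr (is_normZ Nout_norm) cmod_a -ler_pdivrMr // mulrC.
Qed.

End OperatorNorm.

Lemma opnorm_exprn_mulmx_le (R : realType) m (N : 'cV[R[i]]_m -> R) :
  is_norm N -> forall (A : 'M[R[i]]_m) t y,
  N (A ^+ t *m y) <= opnorm N N A ^+ t * N y.
Proof.
move=> N_norm A t y; elim: t => [|t IHt]; first by rewrite expr0_mulmx expr0 mul1r.
rewrite exprS_mulmx exprS -mulrA.
apply: le_trans (opnorm_mulmx_le N_norm N_norm _ _) _.
by rewrite ler_wpM2l // opnorm_ge0.
Qed.

Lemma geometric_domination_cvg0 (R : realType) (I : eqType) (r : seq I)
    (c a : I -> R) (b : R) (u : nat -> R) :
  0 < b -> (forall k, k \in r -> 0 <= a k < b) ->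
  (forall t, 0 <= u t <= \sum_(k <- r) c k * a k ^+ t) ->
  (fun t => u t / b ^+ t) @ \oo --> (0 : R).
Proof.
move=> b0 ab u_le.
pose g t := \sum_(k <- r | k \in r) c k * (a k / b) ^+ t.
apply: (@squeeze_cvgr _ _ _ _ (fun=> 0) g).
- apply: nearW => t; have /andP[u0 u_sum] := u_le t.
  rewrite divr_ge0 ?exprn_ge0 ?(ltW b0) //= ler_pdivrMr ?exprn_gt0 //.
  rewrite /g -big_seq mulr_suml.
  apply: (le_trans u_sum); rewrite le_eqVlt; apply/orP; left; apply/eqP.
  by apply: eq_bigr => k _; rewrite expr_div_n mulrA divfK // expf_neq0 ?lt0r_neq0.
- exact: cvg_cst.
- have : g @ \oo --> \sum_(k <- r | k \in r) c k * 0.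
    apply: cvg_big => [|k k_in]; first exact: add_continuous.
    apply: cvgM; first exact: cvg_cst.
    apply: cvg_expr; have /andP[a0 ab_k] := ab k k_in.
    by rewrite ger0_norm ?divr_ge0 ?(ltW b0) // ltr_pdivrMr // mul1r.
  by rewrite big1 // => k _; rewrite mulr0.
Qed.

Lemma increasing_chain_lt (R : numDomainType) n (f : nat -> R) :
  (forall k, (0 < k < n)%N -> f k < f k.+1) ->
  forall j i, (0 < j < i)%N -> (i <= n)%N -> f j < f i.
Proof.
move=> f_step j i /andP[j0 ji] i_le_n.
have f_homo : {in [pred k | 0 < k <= n]%N &, {homo f : a b / (a < b)%N >-> a < b}}.
  apply: Order.NatMonotonyTheory.homo_ltn_lt_in.
  - move=> a b /andP[a0 _] /andP[_ bn] k /andP[ak kb].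
    by rewrite inE (leq_trans a0 (ltnW ak)) (leq_trans (ltnW kb) bn).
  - by move=> k /andP[k0 _] /andP[_ kn]; apply: f_step; rewrite k0.
have j_le_n : (j <= n)%N := leq_trans (ltnW ji) i_le_n.
by apply: f_homo; rewrite ?inE ?j0 ?j_le_n ?(ltn_trans j0 ji).
Qed.

Section LinearCascade.
Variables (R : realType) (n : nat) (d : nat -> nat).
Local Notation C := R[i].
Variables (N : forall i, 'cV[C]_(d i) -> R) (L : forall i, 'M[C]_(d i))
  (Cm : forall i, 'M[C]_(d i, d i.-1)) (V : forall i, 'M[C]_(d i))
  (lam : forall i, 'I_(d i) -> C).
Local Set Implicit Arguments. Local Unset Strict Implicit.
Local Notation D := (Dm L Cm V lam).

Lemma Dm_diag i : (0 < i)%N -> D i i = 1%:M.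
Proof. by case: i => // i _ /=; rewrite eqxx conform_mx_id. Qed.

Lemma Dm_recE i j : (0 < j <= i)%N ->
  D i.+1 j = sylvester_sol (L i.+1) (V i.+1) (lam i.+1) (V j) (lam j)
                           (Cm i.+1 *m D i j).
Proof.
by case/andP=> j0 ji /=; rewrite ltn_eqF ?ltnS // j0 ji /sylvester_sol !mulmxA.
Qed.

Hypothesis N_norm : forall i, (1 <= i <= n)%N -> is_norm (N i).
Hypothesis LV : forall i, (1 <= i <= n)%N ->
  [/\ L i \in unitmx, V i \in unitmx
    & L i *m V i = V i *m diag_mx (\row_k lam i k)].
Hypothesis disjoint_spectra : forall i j, (1 <= i <= n)%N -> (1 <= j <= n)%N ->
  i != j -> forall a : C, ~~ (eigenvalue (L i) a && eigenvalue (L j) a).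

Lemma Dm_sylvester i j : (0 < j < i)%N -> (i <= n)%N ->
  L i *m D i j - D i j *m L j = Cm i *m D i.-1 j.
Proof.
case/andP=> j0; case: i => // i ji iSn; rewrite Dm_recE ?j0 //.
have iS : (1 <= i.+1 <= n)%N by [].
have [Li_unit Vi_unit LVi] := LV iS.
have jn : (1 <= j <= n)%N by rewrite j0 (leq_trans (ltnW ji)).
have [_ Vj_unit LVj] := LV jn.
apply: sylvester_solP => // l m; apply/eqP => lam_eq.
have ij : i.+1 != j by rewrite gtn_eqF.
have := disjoint_spectra iS jn ij (lam i.+1 l).
rewrite (eigenvalue_diagonalized Vi_unit LVi) lam_eq.
by rewrite (eigenvalue_diagonalized Vj_unit LVj).
Qed.

Lemma iter_Lin_sub_pert x t i : (1 < i <= n)%N ->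
  iter t (Lin L Cm) x i - L i ^+ t *m pert D x i =
  \sum_(1 <= j < i) (-1) ^+ (i - j) *: (D i j *m (L j ^+ t *m pert D x j)).
Proof.
case/andP=> i1 i_le_n; have i0 := ltnW i1.
rewrite (iter_Lin_closed_form (@Dm_diag) Dm_sylvester) ?i0 //.
by rewrite big_nat_recr //= subnn expr0 scale1r Dm_diag // mul1mx addrK.
Qed.

Lemma norm_iter_Lin_sub_pert_le x t i : (1 < i <= n)%N ->
  N i (iter t (Lin L Cm) x i - L i ^+ t *m pert D x i)
  <= \sum_(1 <= j < i) opnorm (N j) (N i) (D i j) * N j (L j ^+ t *m pert D x j).
Proof.
move=> i_in; have /andP[i1 i_le_n] := i_in.
have Ni_norm : is_norm (N i) by apply: N_norm; rewrite (ltnW i1) i_le_n.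
rewrite iter_Lin_sub_pert //; apply: le_trans (is_norm_sum Ni_norm _ _ _) _.
apply: ler_sum_nat => j /andP[j0 ji]; rewrite (is_normZ Ni_norm) cmod_sign mul1r.
by apply: opnorm_mulmx_le => //; apply: N_norm; rewrite j0 (leq_trans (ltnW ji)).
Qed.

End LinearCascade.

Theorem corollary3 (R : realType) (n : nat) (d : nat -> nat)
  (N : forall i, 'cV[R[i]]_(d i) -> R)
  (L : forall i, 'M[R[i]]_(d i)) (Cm : forall i, 'M[R[i]]_(d i, d i.-1))
  (V : forall i, 'M[R[i]]_(d i)) (lam : forall i, 'I_(d i) -> R[i]) :
  (2 <= n)%N ->
  (forall i, (1 <= i <= n)%N -> (1 <= d i)%N) ->
  (forall i, (1 <= i <= n)%N -> is_norm (N i)) ->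
  (* (i) invertible, diagonalizable: L_i V_i = V_i Lambda_i *)
  (forall i, (1 <= i <= n)%N ->
     [/\ L i \in unitmx, V i \in unitmx
       & L i *m V i = V i *m diag_mx (\row_k lam i k)]) ->
  (* (ii) disjoint spectra *)
  (forall i j, (1 <= i <= n)%N -> (1 <= j <= n)%N -> i != j ->
     forall a : R[i], ~~ (eigenvalue (L i) a && eigenvalue (L j) a)) ->
  (* (iii) ||L_1|| < ... < ||L_n|| <= 1 *)
  (forall i, (1 <= i < n)%N ->
     opnorm (N i) (N i) (L i) < opnorm (N i.+1) (N i.+1) (L i.+1)) ->
  opnorm (N n) (N n) (L n) <= 1 ->
  let D := Dm L Cm V lam in
  forall i, (2 <= i <= n)%N ->
  forall (x : forall j, 'cV[R[i]]_(d j)),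
    (forall t : nat,
       N i ((iter t (Lin L Cm) x) i - L i ^+ t *m pert D x i)
       <= \sum_(1 <= j < i)
            opnorm (N j) (N i) (D i j) * N j (L j ^+ t *m pert D x j))
    /\
    ((fun t : nat =>
        N i ((iter t (Lin L Cm) x) i - L i ^+ t *m pert D x i)
        / opnorm (N i) (N i) (L i) ^+ t) @ \oo --> (0 : R)).
Proof.
move=> _ _ N_norm LV spectra norm_chain _ D i i_in x.
have /andP[i1 i_le_n] := i_in.
have Ni_norm : is_norm (N i) by apply: N_norm; rewrite (ltnW i1) i_le_n.
have j_in j : (0 < j < i)%N -> (0 < j <= n)%N.
  by case/andP=> -> ji; rewrite (leq_trans (ltnW ji)).
pose r j := opnorm (N j) (N j) (L j).
have r_ge0 j : (0 < j <= n)%N -> 0 <= r j.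
  by move=> jn; exact: opnorm_ge0 (N_norm j jn) (N_norm j jn) (L j).
have r_lt j : (0 < j < i)%N -> r j < r i.
  by move=> ji; apply: (@increasing_chain_lt _ n r norm_chain).
split=> [t|]; first exact: (norm_iter_Lin_sub_pert_le Cm N_norm LV spectra).
apply: (@geometric_domination_cvg0 _ _ (index_iota 1 i)
  (fun j => opnorm (N j) (N i) (D i j) * N j (pert D x j)) r).
- apply: le_lt_trans (r_lt 1 i1); apply: r_ge0.
  exact: leq_trans (ltnW i1) i_le_n.
- by move=> j; rewrite mem_index_iota => ji; rewrite r_ge0 ?r_lt ?j_in.
- move=> t; rewrite (is_norm_ge0 Ni_norm) /=.
  apply: le_trans (norm_iter_Lin_sub_pert_le Cm N_norm LV spectra _ _ i_in) _.
  apply: ler_sum_nat => j ji; have jn := j_in j ji.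
  rewrite -mulrA ler_wpM2l ?(opnorm_ge0 (N_norm j jn) Ni_norm) // mulrC.
  exact: opnorm_exprn_mulmx_le (N_norm j jn) _ _ _.
Qed.
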